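(* Let $\mathbb{F}_q$ be the finite field with $q$ elements and let $n=p^m$ be a prime power. Assume $\mathrm{char}(\mathbb{F}_q)\neq 2,3,p$. If either (1) $p=2$ and $q\equiv 1\pmod 4$, or (2) $p>2$ and $p\mid q-1$, then $\mathfrak{sl}_n(\mathbb{F}_q)$ has a COD.
   Context: $\mathfrak{sl}_n(\mathbb{F})$ denotes the Lie algebra of $n\times n$ traceless matrices over $\mathbb{F}$. A Cartan subalgebra is a nilpotent self-normalizing subalgebra. A classical Cartan subalgebra of $\mathfrak{L}=\mathfrak{sl}_n(\mathbb{F})$ (with $\ell=\mathrm{char}\,\mathbb{F}$) is an abelian Cartan subalgebra $H$ such that: (a) $\mathfrak{L}=\bigoplus_\alpha \mathfrak{L}_\alpha$ with $\mathfrak{L}_\alpha=\{x: [x,h]=\alpha(h)x\ \forall h\in H\}$ over linear functionals $\alpha$ on $H$ (roots); (b) for each root $\alpha\ne0$, $[\mathfrak{L}_\alpha,\mathfrak{L}_{-\alpha}]$ is one-dimensional; (c) for roots $\alpha,\beta$ with $\beta\neq0$, not all $\alpha+k\beta$ ($1\le k\le \ell-1$) are roots. The Killing form is $K(A,B)=2n\,\mathrm{Tr}(AB)$. A COD of $\mathfrak{sl}_n(\mathbb{F})$ is a vector space decomposition $\mathfrak{sl}_n(\mathbb{F})=H_0\oplus\cdots\oplus H_n$ into classical Cartan subalgebras that are pairwise orthogonal with respect to $K$. *)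

From HB Require Import structures.
From mathcomp Require Import all_boot all_order all_algebra.
Unset Printing Implicit Defensive.
Import Order.TTheory GRing.Theory.
Local Open Scope ring_scope.

Section LieDefs.
Variables (F : finFieldType) (n : nat).
Local Notation M := 'M[F]_n.

Definition lbr (x y : M) : M := x *m y - y *m x.

Definition sl : {vspace M} := span (enum [pred x : M | \tr x == 0]).

Definition brsp (A B : {vspace M}) : {vspace M} :=
  span [seq lbr ab.1 ab.2 | ab <- enum [pred ab : M * M | (ab.1 \in A) && (ab.2 \in B)]].

Definition is_subalg (H : {vspace M}) : Prop :=
  (H <= sl)%VS /\ forall x y, x \in H -> y \in H -> lbr x y \in H.

Definition lie_nilpotent (H : {vspace M}) : Prop :=
  exists k : nat, iter k (brsp H) H = 0%VS.

Definition self_normalizing (H : {vspace M}) : Prop :=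
  forall x, x \in sl -> (forall h, h \in H -> lbr x h \in H) -> x \in H.

Definition cartan (H : {vspace M}) : Prop :=
  [/\ is_subalg H, lie_nilpotent H & self_normalizing H].

Definition lie_abelian (H : {vspace M}) : Prop :=
  forall x y, x \in H -> y \in H -> lbr x y = 0.

(* Linear functionals on H are represented by their values on the basis
   vbasis H, i.e. by row vectors a : 'rV_(\dim H); this is a bijection
   with the dual space of H. *)
Definition fval (H : {vspace M}) (a : 'rV[F]_(\dim H)) (h : M) : F :=
  \sum_(i < \dim H) a 0 i * coord (vbasis H) i h.

Definition rootsp (H : {vspace M}) (a : 'rV[F]_(\dim H)) : {vspace M} :=
  span (enum [pred x : M | (x \in sl) &&
        [forall h : M, (h \in H) ==> (lbr x h == fval H a h *: x)]]).

Definition is_root (H : {vspace M}) (a : 'rV[F]_(\dim H)) : bool :=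
  rootsp H a != 0%VS.

Definition classical_cartan (H : {vspace M}) : Prop :=
  [/\ cartan H, lie_abelian H,
      sl = (\sum_(a : 'rV[F]_(\dim H)) rootsp H a)%VS
        /\ directv (\sum_(a : 'rV[F]_(\dim H)) rootsp H a)%VS,
      (forall a, is_root H a -> a != 0 -> \dim (brsp (rootsp H a) (rootsp H (- a))) = 1%N)
    &
      (forall (l : nat) a b, l \in [pchar F] -> is_root H a -> is_root H b -> b != 0 ->
         ~ (forall k : nat, (1 <= k <= l.-1)%N -> is_root H (a + k%:R *: b)))].

Definition killing (A B : M) : F := (2 * n)%:R * \tr (A *m B).

Definition has_COD : Prop :=
  exists H : 'I_n.+1 -> {vspace M},
    [/\ sl = (\sum_i H i)%VS, directv (\sum_i H i)%VS,
        (forall i, classical_cartan (H i))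
      & forall i j, i != j -> forall x y, x \in H i -> y \in H j -> killing x y = 0].

End LieDefs.

From Pilot Require Import Defs.
From HB Require Import structures.
From mathcomp Require Import all_boot all_order all_algebra all_fingroup all_solvable all_field.
From mathcomp Require Import zify ring.
Set Implicit Arguments. Unset Strict Implicit. Unset Printing Implicit Defensive.
Import Order.TTheory GRing.Theory.
Local Open Scope ring_scope.

(* Write F^n in a basis (a frame).  The traceless matrices diagonal in the frame form a
   classical Cartan subalgebra of sl_n as soon as 2, 3 and n are invertible in F: its
   roots are the e_t - e_s and its root spaces the lines spanned by the matrix units of
   the frame.  Two such subalgebras are orthogonal for the trace form when the frames
   are mutually unbiased, i.e. (Q P')_st (Q' P)_ts does not depend on s and t, so n + 1
   mutually unbiased frames give a COD.  For n = p^m they come from K = F_(p^m): given an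
   additive character chi : K -> F and, for each a in K, a quadratic phase f_a with
   f_a(y + t) = f_a(y) f_a(t) chi(a y t), take the standard basis and the bases
   (f_a(y) chi(y t))_y; unbiasedness is the Gauss-sum identity
   |sum_y (f_b / f_a)(y) chi(d y)|^2 = |K|.  A nontrivial chi needs a primitive p-th root
   of unity in F (p | q - 1).  For p odd, f_a(y) = chi(a y^2 / 2); for p = 2, chi takes
   values +-1 and f_a needs a square root of -1 in F (q = 1 mod 4). *)

Lemma mxtrace_delta (R : nzRingType) n (i j : 'I_n) :
  \tr (delta_mx i j : 'M[R]_n) = (i == j)%:R.
Proof.
rewrite /mxtrace (bigD1 i) //= mxE eqxx big1 ?addr0 // => k /negPf ki.
by rewrite mxE ki.
Qed.

Section RootSpaces.
Variables (F : finFieldType) (n : nat).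
Local Notation M := 'M[F]_n.
Local Notation fval := (fval F n).
Local Notation lbr := (lbr F n).
Local Notation rootsp := (rootsp F n).
Local Notation sl := (sl F n).
Implicit Types (H : {vspace M}) (x h : M).

Lemma mem_span_enum (S : pred M) : S 0 ->
    (forall c x y, S x -> S y -> S (c *: x + y)) ->
  forall x, (x \in span (enum S)) = S x.
Proof.
move=> S0 S_lin x; apply/idP/idP => [|Sx]; last by apply: memv_span; rewrite mem_enum.
have -> : span (enum S) = span (in_tuple (enum S)) by [].
move/coord_span ->; elim/big_ind: _ => // [u v Su Sv|i _].
  by rewrite -[u]scale1r; apply: S_lin.
rewrite -[_ *: _]addr0; apply: S_lin => //.
have : (in_tuple (enum S))`_i \in enum S by apply: mem_nth.
by rewrite mem_enum.
Qed.

Lemma mem_sl x : (x \in sl) = (\tr x == 0).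
Proof.
rewrite mem_span_enum //= ?mxtrace0 // => c u v /eqP tu /eqP tv.
by rewrite mxtraceD mxtraceZ tu tv mulr0 addr0.
Qed.

Lemma sl_lker : sl = lker (linfun (@mxtrace F n : M -> F^o)).
Proof. by apply/vspaceP => x; rewrite memv_ker lfunE mem_sl. Qed.

Lemma dim_capv_sl (U : {vspace M}) A :
  A \in U -> \tr A != 0 -> \dim (U :&: sl) = (\dim U).-1.
Proof.
move=> AU trA; rewrite sl_lker; set tr := linfun _.
have dim_img : \dim (tr @: U) = 1%N.
  apply/eqP; rewrite eqn_leq (leq_trans (dimvS (subvf _))) ?dimvf //= lt0n dimv_eq0.
  by apply: contraNneq trA => img0; have := memv_img tr AU; rewrite img0 memv0 lfunE.
by have := limg_ker_dim tr U; rewrite dim_img addn1 => <-.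
Qed.

Lemma dim_sl : (0 < n)%N -> \dim sl = (n * n).-1.
Proof.
move=> n_gt0; pose i0 := Ordinal n_gt0.
rewrite -[sl]capfv (@dim_capv_sl _ (delta_mx i0 i0)) ?memvf ?dimvf ?dim_matrix //.
by rewrite mxtrace_delta eqxx oner_eq0.
Qed.

Lemma fval0 H h : fval H 0 h = 0.
Proof. by rewrite /Defs.fval big1 // => i _; rewrite mxE mul0r. Qed.

Lemma fvalDZ H (a b : 'rV_(\dim H)) (k : F) h :
  fval H (a + k *: b) h = fval H a h + k * fval H b h.
Proof.
rewrite /Defs.fval mulr_sumr -big_split; apply: eq_bigr => i _.
by rewrite !mxE mulrDl mulrA.
Qed.

Lemma mem_rootsp H a x : (x \in rootsp H a) =
  (x \in sl) && [forall h, (h \in H) ==> (lbr x h == fval H a h *: x)].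
Proof.
rewrite mem_span_enum //=.
  rewrite mem0v; apply/forallP => h; apply/implyP => _.
  by rewrite /Defs.lbr mul0mx mulmx0 subr0 scaler0.
move=> c u v /andP[sl_u /forallP ru] /andP[sl_v /forallP rv].
rewrite memvD ?memvZ //; apply/forallP => h; apply/implyP => hH.
move: (ru h) (rv h); rewrite hH /Defs.lbr => /eqP eu /eqP ev.
rewrite mulmxDl mulmxDr -!scalemxAl -!scalemxAr opprD addrACA -!scalerBr eu ev.
by rewrite scalerDr !scalerA mulrC.
Qed.

Lemma lbr_diag_mxE (y : M) (d : 'rV_n) i j : lbr (y : M) (diag_mx d) i j = y i j * (d 0 j - d 0 i).
Proof. by rewrite /Defs.lbr mul_mx_diag mul_diag_mx !mxE mulrBr [d 0 i * _]mulrC. Qed.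

Lemma rootsp_sl H a : (rootsp H a <= sl)%VS.
Proof. by apply/subvP => x; rewrite mem_rootsp => /andP[]. Qed.

Lemma fval_row H (f : {linear M -> F^o}) h :
  h \in H -> fval H (\row_i f (vbasis H)`_i) h = f h.
Proof.
move=> hH; rewrite [in RHS](coord_vbasis hH) linear_sum /Defs.fval.
by apply: eq_bigr => i _; rewrite mxE linearZ mulrC.
Qed.

Lemma fval_vbasis H (a : 'rV_(\dim H)) (j : 'I_(\dim H)) :
  fval H a (vbasis H)`_j = a 0 j.
Proof.
have free_basis := basis_free (vbasisP H).
rewrite /Defs.fval (bigD1 j) //= coord_free // eqxx mulr1 big1 ?addr0 // => i /negPf ij.
by rewrite coord_free // eq_sym ij mulr0.
Qed.

Lemma fval_inj H (a b : 'rV_(\dim H)) :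
  {in H, forall h, fval H a h = fval H b h} -> a = b.
Proof.
move=> eq_ab; apply/rowP => j; rewrite -!fval_vbasis; apply: eq_ab.
by apply: vbasis_mem; apply: mem_nth; rewrite size_tuple.
Qed.

End RootSpaces.

Section BoolDifferences.
Variable R : nzRingType.
Hypotheses (two_neq0 : (2%:R : R) != 0) (three_neq0 : (3%:R : R) != 0).

Lemma subr_bool_eq1 (b c : bool) : b%:R - c%:R = 1 :> R -> b && ~~ c.
Proof.
case: b c => [] [] //= /eqP; rewrite ?subrr ?subr0 ?sub0r 1?eq_sym ?oner_eq0 //.
by rewrite -subr_eq0 opprK -(natrD R 1 1) (negPf two_neq0).
Qed.

Lemma subr_bool_neq2 (b c : bool) : b%:R - c%:R != 2%:R :> R.
Proof.
case: b c => [] [] /=; rewrite ?subrr ?subr0 ?sub0r eq_sym //.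
- by rewrite -subr_eq0 -(natrB R (isT : 1 <= 2)%N) oner_eq0.
- by rewrite -subr_eq0 opprK -(natrD R 2 1).
Qed.

End BoolDifferences.

Section FrameCartan.
Variables (F : finFieldType) (n : nat) (P Q : 'M[F]_n).
Hypothesis QP : Q *m P = 1%:M.
Local Notation M := 'M[F]_n.
Local Notation fval := (fval F n).
Local Notation lbr := (lbr F n).
Local Notation rootsp := (rootsp F n).
Local Notation sl := (sl F n).
Implicit Types (x y h : M).

Let PQ : P *m Q = 1%:M. Proof. exact: mulmx1C. Qed.

(* A frame is a basis of F^n, stored as the columns of P (with inverse Q);
   [to_frame x] is the matrix of x in that basis. *)
Definition from_frame x := P *m x *m Q.
Definition to_frame x := Q *m x *m P.

Fact from_frame_is_linear : linear from_frame.
Proof. by move=> c x y; rewrite /from_frame mulmxDr mulmxDl -scalemxAr -scalemxAl. Qed.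
HB.instance Definition _ :=
  GRing.isLinear.Build F M M *:%R from_frame from_frame_is_linear.

Fact to_frame_is_linear : linear to_frame.
Proof. by move=> c x y; rewrite /to_frame mulmxDr mulmxDl -scalemxAr -scalemxAl. Qed.
HB.instance Definition _ :=
  GRing.isLinear.Build F M M *:%R to_frame to_frame_is_linear.

Lemma from_frameK : cancel from_frame to_frame.
Proof. by move=> x; rewrite /to_frame /from_frame !mulmxA QP mul1mx -mulmxA QP mulmx1. Qed.

Lemma to_frameK : cancel to_frame from_frame.
Proof. by move=> x; rewrite /to_frame /from_frame !mulmxA PQ mul1mx -mulmxA PQ mulmx1. Qed.

Lemma to_frame_inj : injective to_frame. Proof. exact: can_inj to_frameK. Qed.

Lemma to_frameM : {morph to_frame : x y / x *m y}.
Proof. by move=> x y; rewrite /to_frame !mulmxA -[Q *m x *m P *m Q]mulmxA PQ mulmx1. Qed.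

Lemma to_frame_lbr x y : to_frame (lbr x y) = lbr (to_frame x) (to_frame y).
Proof. by rewrite /Defs.lbr linearB /= !to_frameM. Qed.

Lemma mxtrace_to_frame x : \tr (to_frame x) = \tr x.
Proof. by rewrite /to_frame mxtrace_mulC mulmxA PQ mul1mx. Qed.

Lemma mxtrace_from_frame x : \tr (from_frame x) = \tr x.
Proof. by rewrite -[in RHS](from_frameK x) mxtrace_to_frame. Qed.

Definition frame_diag : {vspace M} := span (enum [pred x | is_diag_mx (to_frame x)]).

Definition frame_cartan : {vspace M} := (frame_diag :&: sl)%VS.

Lemma mem_frame_diag x : (x \in frame_diag) = is_diag_mx (to_frame x).
Proof.
apply: mem_span_enum => /= [|c u v]; first by rewrite linear0 mx0_is_diag.
move=> /diag_mxP[du du_def] /diag_mxP[dv dv_def]; rewrite linearP /= du_def dv_def.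
by apply/diag_mxP; exists (c *: du + dv); rewrite linearP.
Qed.

Lemma mem_frame_cartan x : (x \in frame_cartan) = (\tr x == 0) && is_diag_mx (to_frame x).
Proof. by rewrite memv_cap mem_frame_diag mem_sl andbC. Qed.

Lemma frame_cartanP x :
  reflect (exists2 d : 'rV_n, \sum_i d 0 i = 0 & x = from_frame (diag_mx d)) (x \in frame_cartan).
Proof.
rewrite mem_frame_cartan; apply: (iffP andP) => [[/eqP tx /diag_mxP[d dx]]|[d d0 ->]].
  by exists d; rewrite -?mxtrace_diag -dx ?mxtrace_to_frame ?to_frameK.
by rewrite mxtrace_from_frame mxtrace_diag d0 from_frameK diag_mx_is_diag.
Qed.

Lemma frame_cartan_sl : (frame_cartan <= sl)%VS.
Proof. exact: capvSr. Qed.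

Lemma lbr_frame_cartan x y : x \in frame_cartan -> y \in frame_cartan -> lbr x y = 0.
Proof.
move=> /frame_cartanP[d _ ->] /frame_cartanP[e _ ->].
by apply: to_frame_inj; rewrite to_frame_lbr !from_frameK linear0 /Defs.lbr diag_mxC subrr.
Qed.

Definition frame_unit i j := from_frame (delta_mx i j).

Lemma mxtrace_frame_unit i j : \tr (frame_unit i j) = (i == j)%:R.
Proof. by rewrite mxtrace_from_frame mxtrace_delta. Qed.

Lemma frame_unit_diag i : frame_unit i i \in frame_diag.
Proof.
rewrite mem_frame_diag from_frameK; apply/is_diag_mxP => k l kl; rewrite mxE.
by have /negPf-> : ~~ ((k == i) && (l == i)) by apply: contra kl => /andP[/eqP-> /eqP->].
Qed.

Lemma dim_frame_diag : \dim frame_diag = n.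
Proof.
pose X := [tuple frame_unit i i | i < n].
have X_free : free X.
  apply/freeP => c sum0 i; have := congr1 (fun z => to_frame z i i) sum0.
  rewrite /= linear_sum linear0 summxE (bigD1 i) //= big1 ?addr0 => [|j ji].
    by rewrite linearZ /= nth_mktuple from_frameK !mxE !eqxx mulr1.
  by rewrite linearZ /= nth_mktuple from_frameK !mxE [i == j]eq_sym (negPf ji) mulr0.
suff -> : frame_diag = <<X>>%VS by rewrite (eqP X_free) size_tuple.
apply/eqP; rewrite eqEsubv; apply/andP; split; last first.
  by apply/span_subvP => _ /tnthP[i ->]; rewrite tnth_mktuple frame_unit_diag.
apply/subvP => x; rewrite mem_frame_diag => /diag_mxP[d xd].
rewrite -(to_frameK x) xd diag_mx_sum_delta linear_sum; apply: (memv_suml (I := 'I_n)) => i _.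
rewrite linearZ /=; apply/memvZ; rewrite -/(frame_unit i i).
by rewrite -(tnth_mktuple (fun i => frame_unit i i) i) memv_span ?mem_tnth.
Qed.

Lemma dim_frame_cartan : (0 < n)%N -> \dim frame_cartan = n.-1.
Proof.
move=> n_gt0; pose i0 := Ordinal n_gt0.
by rewrite (@dim_capv_sl _ _ _ (frame_unit i0 i0)) ?dim_frame_diag ?frame_unit_diag //
  mxtrace_frame_unit eqxx oner_eq0.
Qed.

Definition frame_weight i j (h : M) : F^o := to_frame h j j - to_frame h i i.

Fact frame_weight_is_linear i j : linear (frame_weight i j).
Proof.
by move=> c x y; rewrite /frame_weight linearP /= !mxE opprD addrACA -mulrBr.
Qed.
HB.instance Definition _ i j :=
  GRing.isLinear.Build F M F^o *:%R (frame_weight i j) (frame_weight_is_linear i j).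

Lemma frame_weight_diag i j (d : 'rV_n) :
  frame_weight i j (from_frame (diag_mx d)) = d 0 j - d 0 i.
Proof. by rewrite /frame_weight from_frameK !mxE !eqxx !mulr1n. Qed.

Local Notation H := frame_cartan.

Definition frame_root i j : 'rV_(\dim H) := \row_k frame_weight i j (vbasis H)`_k.

Lemma fval_frame_root i j h : h \in H -> fval H (frame_root i j) h = frame_weight i j h.
Proof. exact: fval_row. Qed.

Lemma frame_root_id i : frame_root i i = 0.
Proof. by apply/rowP => k; rewrite !mxE /frame_weight subrr. Qed.

Lemma frame_root_opp i j : frame_root j i = - frame_root i j.
Proof. by apply/rowP => k; rewrite !mxE /frame_weight opprB. Qed.

Lemma rootsp_entry a x i j :
  x \in rootsp H a -> to_frame x i j != 0 -> a = frame_root i j.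
Proof.
rewrite mem_rootsp => /andP[_ /forallP root_x] xij.
apply: fval_inj => h /[dup] hH /frame_cartanP[d _ hd]; rewrite fval_frame_root //.
move: (root_x h); rewrite hH => /eqP/(congr1 to_frame)/matrixP/(_ i j).
rewrite to_frame_lbr linearZ hd from_frameK lbr_diag_mxE frame_weight_diag.
by rewrite [in X in _ = X]mxE mulrC => /(mulIf xij).
Qed.

Lemma frame_unit_rootsp i j : i != j -> frame_unit i j \in rootsp H (frame_root i j).
Proof.
move=> ij; rewrite mem_rootsp mem_sl mxtrace_frame_unit (negPf ij) eqxx /=.
apply/forallP => h; apply/implyP => /[dup] hH /frame_cartanP[d _ hd].
rewrite fval_frame_root // hd frame_weight_diag; apply/eqP; apply: to_frame_inj.
rewrite to_frame_lbr linearZ /= /frame_unit !from_frameK; apply/matrixP => k l.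
rewrite lbr_diag_mxE !mxE.
by case: (eqVneq k i) => [->|]; case: (eqVneq l j) => [->|]; rewrite ?mul0r ?mulr0 ?mul1r ?mulr1.
Qed.

Lemma frame_cartan_rootsp0 : (H <= rootsp H 0)%VS.
Proof.
apply/subvP => x xH; rewrite mem_rootsp (subvP frame_cartan_sl) //=.
by apply/forallP => h; apply/implyP => hH; rewrite lbr_frame_cartan // fval0 scale0r.
Qed.

Lemma is_root_frame a : is_root F n H a -> exists i j, a = frame_root i j.
Proof.
rewrite /is_root -vpick0 => x_neq0; have x_root := memv_pick (rootsp H a).
have /matrix0Pn[i [j xij]] : to_frame (vpick (rootsp H a)) != 0.
  by apply: contra x_neq0 => /eqP/(congr1 from_frame); rewrite to_frameK linear0 => ->.
by exists i, j; apply: rootsp_entry xij.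
Qed.

Lemma lbr_frame_unit i j :
  lbr (frame_unit i j) (frame_unit j i) = from_frame (delta_mx i i - delta_mx j j).
Proof. by apply: to_frame_inj; rewrite to_frame_lbr !from_frameK /Defs.lbr !mul_delta_mx. Qed.

Lemma lbr_frame_unit_neq0 i j : i != j -> lbr (frame_unit i j) (frame_unit j i) != 0.
Proof.
move=> ij; rewrite lbr_frame_unit; apply: contra_neq (@oner_neq0 F) => /(congr1 to_frame).
by rewrite from_frameK linear0 => /matrixP/(_ i i); rewrite !mxE !eqxx (negPf ij) subr0.
Qed.

Hypothesis n_neq0 : (n%:R : F) != 0.

(* The roots are told apart by their values on the [frame_h t]. *)
Definition frame_hdiag t : 'rV[F]_n := \row_u ((u == t)%:R * n%:R - 1).
Definition frame_h t := from_frame (diag_mx (frame_hdiag t)).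

Lemma frame_hdiagE t u : frame_hdiag t 0 u = (u == t)%:R * n%:R - 1.
Proof. exact: mxE. Qed.

Lemma frame_h_in t : frame_h t \in H.
Proof.
apply/frame_cartanP; exists (frame_hdiag t) => //.
under eq_bigr do rewrite frame_hdiagE.
rewrite sumrB sumr_const card_ord (bigD1 t) //= eqxx mul1r big1 ?addr0 ?subrr // => u /negPf ->.
by rewrite mul0r.
Qed.

Lemma fval_frame_root_h i j t :
  fval H (frame_root i j) (frame_h t) = ((j == t)%:R - (i == t)%:R) * n%:R.
Proof. by rewrite fval_frame_root ?frame_h_in // frame_weight_diag !frame_hdiagE; ring. Qed.

Lemma frame_root_neq0 i j : i != j -> frame_root i j != 0.
Proof.
move=> ij; apply: contra_neq n_neq0 => rij.
by have := fval_frame_root_h i j j; rewrite rij fval0 eqxx (negPf ij) subr0 mul1r.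
Qed.

Lemma mxtrace_frame_diag_mul d e :
  \tr (from_frame (diag_mx d) *m from_frame (diag_mx e)) = \sum_i d 0 i * e 0 i.
Proof.
rewrite -mxtrace_to_frame to_frameM !from_frameK mulmx_diag mxtrace_diag.
by apply: eq_bigr => i _; rewrite mxE.
Qed.

Lemma frame_cartan_nondeg x : x \in H -> {in H, forall h, \tr (x *m h) = 0} -> x = 0.
Proof.
move=> /frame_cartanP[d d0 ->] x_orth; suff -> : d = 0 by rewrite !linear0.
apply/rowP => w; rewrite mxE; apply: (mulIf n_neq0); rewrite mul0r.
have := x_orth _ (frame_h_in w); rewrite mxtrace_frame_diag_mul => <-.
under eq_bigr do rewrite frame_hdiagE mulrBr mulr1 mulrA.
rewrite sumrB d0 subr0 (bigD1 w) //= eqxx mulr1 big1 ?addr0 // => u /negPf ->.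
by rewrite mulr0 mul0r.
Qed.

Hypothesis two_neq0 : (2%:R : F) != 0.

Lemma frame_root_inj i j k l :
  i != j -> frame_root k l = frame_root i j -> (k, l) = (i, j).
Proof.
move=> ij e; have at_h t : (l == t)%:R - (k == t)%:R = (j == t)%:R - (i == t)%:R :> F.
  by apply: (mulIf n_neq0); rewrite -!fval_frame_root_h e.
have := at_h i; rewrite eqxx [j == i]eq_sym (negPf ij) sub0r -opprB => /eqP.
rewrite eqr_opp => /eqP/(subr_bool_eq1 two_neq0)/andP[/eqP-> _].
have := at_h j; rewrite eqxx (negPf ij) subr0.
by move=> /(subr_bool_eq1 two_neq0)/andP[/eqP-> _].
Qed.

Lemma rootsp_frame_root i j :
  i != j -> (rootsp H (frame_root i j) <= <[frame_unit i j]>)%VS.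
Proof.
move=> ij; apply/subvP => x x_root; apply/vlineP; exists (to_frame x i j).
have entry0 k l : (k, l) != (i, j) -> to_frame x k l = 0.
  apply: contraNeq => xkl; have /esym rkl := rootsp_entry x_root xkl.
  case: (eqVneq k l) => [kl|_]; last by rewrite (frame_root_inj ij rkl).
  by move: rkl; rewrite kl frame_root_id => /esym/eqP; rewrite (negPf (frame_root_neq0 ij)).
apply: to_frame_inj; rewrite linearZ /= /frame_unit from_frameK.
move: (to_frame x) entry0 => y y0; apply/matrixP => k l; rewrite !mxE.
case: (eqVneq (k, l) (i, j)) => [[-> ->]|kl]; first by rewrite !eqxx mulr1.
by rewrite y0 // -xpair_eqE (negPf kl) mulr0.
Qed.

Lemma frame_rootsp_sum : sl = (\sum_a rootsp H a)%VS.
Proof.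
apply/eqP; rewrite eqEsubv; apply/andP; split; last by apply/subv_sumP => a _; apply: rootsp_sl.
apply/subvP => x; rewrite mem_sl => /eqP tx.
set D := diag_mx (\row_k to_frame x k k).
rewrite -(to_frameK x) -(subrK D (to_frame x)) linearD /=; apply: memvD.
  rewrite [_ - D]matrix_sum_delta linear_sum; apply: (memv_suml (I := 'I_n)) => i _.
  rewrite linear_sum; apply: (memv_suml (I := 'I_n)) => j _; rewrite linearZ /=.
  case: (eqVneq i j) => [->|ij].
    rewrite [(_ - D) j j]mxE [(- D) j j]mxE [D j j]mxE [_ 0 j]mxE eqxx mulr1n subrr.
    by rewrite scale0r mem0v.
  apply: (subvP (sumv_sup (frame_root i j) _ (subvv _))) => //.
  exact: memvZ (frame_unit_rootsp ij).
apply: (subvP (sumv_sup 0 _ (subvv _))) => //; apply: (subvP frame_cartan_rootsp0).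
apply/frame_cartanP; exists (\row_k to_frame x k k) => //.
rewrite -[in RHS]tx -(mxtrace_to_frame x).
by apply: eq_bigr => k _; rewrite mxE.
Qed.

Lemma frame_rootsp_direct : directv (\sum_a rootsp H a)%VS.
Proof.
apply/directv_sum_independent => us us_root sum0 a _.
apply: to_frame_inj; rewrite linear0; apply/matrixP => i j; rewrite [RHS]mxE.
apply/eqP; apply: contraT => xij; have ra := rootsp_entry (us_root a isT) xij.
have := congr1 (fun z => to_frame z i j) sum0; rewrite /= linear_sum linear0 summxE.
rewrite (bigD1 a) //= big1 ?addr0 => [e|b ba]; first by rewrite e mxE eqxx in xij.
apply/eqP; apply: contraT => xbij.
by move: ba; rewrite (rootsp_entry (us_root b isT) xbij) ra eqxx.
Qed.

Lemma brsp_frame_rootsp i j : i != j ->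
  brsp F n (rootsp H (frame_root i j)) (rootsp H (frame_root j i)) =
  <[lbr (frame_unit i j) (frame_unit j i)]>%VS.
Proof.
move=> ij; have ji : j != i by rewrite eq_sym.
apply/eqP; rewrite eqEsubv; apply/andP; split.
  apply/span_subvP => z /mapP[[x y]]; rewrite mem_enum /= => /andP[x_root y_root] ->.
  have /vlineP[c ->] := subvP (rootsp_frame_root ij) x x_root.
  have /vlineP[c' ->] := subvP (rootsp_frame_root ji) y y_root.
  rewrite /Defs.lbr -!scalemxAl -!scalemxAr !scalerA mulrC -scalerBr.
  exact/memvZ/memv_line.
rewrite -memvE; apply: memv_span; apply/mapP; exists (frame_unit i j, frame_unit j i) => //.
by rewrite mem_enum inE /= !frame_unit_rootsp.
Qed.

Lemma dim_brsp_frame_rootsp i j : i != j ->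
  \dim (brsp F n (rootsp H (frame_root i j)) (rootsp H (frame_root j i))) = 1%N.
Proof. by move=> ij; rewrite brsp_frame_rootsp // dim_vline lbr_frame_unit_neq0. Qed.

Lemma frame_cartan_self_normalizing : self_normalizing F n H.
Proof.
move=> x; rewrite mem_sl mem_frame_cartan => -> /= x_norm; apply/is_diag_mxP => i j ij.
have := x_norm _ (frame_h_in j).
rewrite mem_frame_cartan => /andP[_ /is_diag_mxP/(_ i j ij)].
rewrite to_frame_lbr /frame_h from_frameK lbr_diag_mxE !frame_hdiagE eqxx [i == j](negPf ij).
rewrite mul1r mul0r sub0r opprK subrK.
by move=> /eqP; rewrite mulf_eq0 (negPf n_neq0) orbF => /eqP.
Qed.

Hypothesis three_neq0 : (3%:R : F) != 0.

(* On [frame_h j] every root takes a value in {-n, 0, n}, while a + k b with b = frame_root i j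
   and a suitable k in {1, 2, 3} would take the value 2n. *)
Lemma frame_root_strings (l : nat) a b : l \in [pchar F] ->
    is_root F n H a -> is_root F n H b -> b != 0 ->
  ~ (forall k : nat, (1 <= k <= l.-1)%N -> is_root F n H (a + k%:R *: b)).
Proof.
move=> l_char a_root b_root b_neq0 strings.
have [i [j b_def]] := is_root_frame b_root.
have ij : i != j by apply: contra_neq b_neq0 => ij; rewrite b_def ij frame_root_id.
have values c : is_root F n H c ->
    exists u v : bool, fval H c (frame_h j) = (u%:R - v%:R) * n%:R.
  by case/is_root_frame => k [l' ->]; rewrite fval_frame_root_h; exists (l' == j), (k == j).
have [u [v a_val]] := values a a_root.
have l_ge4 : (4 <= l)%N.
  move: l_char => /andP[l_prime /eqP l_eq0].
  have : l != 2%N by apply: contra_neq two_neq0 => l2; rewrite -l2 l_eq0.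
  have : l != 3%N by apply: contra_neq three_neq0 => l3; rewrite -l3 l_eq0.
  by have := prime_gt1 l_prime; lia.
have k_range : (1 <= 2 + v - u <= l.-1)%N by move: (u) (v) => [] []; lia.
have [u' [v' ak_val]] := values _ (strings _ k_range).
move: ak_val; rewrite fvalDZ a_val b_def fval_frame_root_h eqxx (negPf ij) subr0 mul1r.
rewrite natrB; last by move: (u) (v) => [] [].
rewrite natrD -mulrDl => /(mulIf n_neq0).
have -> : (u%:R - v%:R + (2%:R + v%:R - u%:R) : F) = 2%:R by ring.
by move/eqP; rewrite eq_sym (negPf (subr_bool_neq2 two_neq0 three_neq0 _ _)).
Qed.

Theorem frame_cartan_classical : classical_cartan F n H.
Proof.
have H_abelian : lie_abelian F n H by move=> x y; apply: lbr_frame_cartan.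
split=> //.
- split; last exact: frame_cartan_self_normalizing.
    by split=> [|x y xH yH]; [exact: frame_cartan_sl | rewrite H_abelian ?mem0v].
  exists 1%N; apply/eqP; rewrite -subv0; apply/span_subvP => z /mapP[[x y]].
  by rewrite mem_enum /= => /andP[xH yH] ->; rewrite H_abelian ?mem0v.
- exact: (conj frame_rootsp_sum frame_rootsp_direct).
- move=> a /is_root_frame[i [j ->]] root_neq0.
  have ij : i != j by apply: contra_neq root_neq0 => ->; rewrite frame_root_id.
  by rewrite -frame_root_opp dim_brsp_frame_rootsp.
- exact: frame_root_strings.
Qed.

End FrameCartan.

Lemma mxtrace_diag_mul_diag_mul (R : comNzRingType) n (d e : 'rV[R]_n) (A B : 'M[R]_n) :
  \tr (diag_mx d *m A *m diag_mx e *m B) =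
  \sum_s \sum_t d 0 s * e 0 t * (A s t * B t s).
Proof.
apply: eq_bigr => s _; rewrite mxE; apply: eq_bigr => t _.
by rewrite mul_mx_diag mul_diag_mx !mxE; ring.
Qed.

Section UnbiasedFrames.
Variables (F : finFieldType) (n : nat).
Local Notation M := 'M[F]_n.

(* For orthonormal frames the hypothesis says that |<u_s, u'_t>|^2 is constant. *)
Lemma frame_cartan_orthogonal (P Q P' Q' : M) (k : F) :
    Q *m P = 1%:M -> Q' *m P' = 1%:M ->
    (forall s t, (Q *m P') s t * (Q' *m P) t s = k) ->
  {in frame_cartan P Q & frame_cartan P' Q', forall x y, \tr (x *m y) = 0}.
Proof.
move=> QP QP' unbiased _ _ /(frame_cartanP QP)[d _ ->] /(frame_cartanP QP')[e e0 ->].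
have -> : from_frame P Q (diag_mx d) *m from_frame P' Q' (diag_mx e) =
    P *m (diag_mx d *m (Q *m P') *m diag_mx e *m Q') by rewrite /from_frame !mulmxA.
rewrite mxtrace_mulC -[_ *m Q' *m P]mulmxA mxtrace_diag_mul_diag_mul.
under eq_bigr do under eq_bigr do rewrite unbiased -mulrA mulrCA.
by rewrite big1 // => s _; rewrite -mulr_suml e0 mul0r.
Qed.

Lemma unbiased_frames_COD (P Q : 'I_n.+1 -> M) (k : F) :
    (n%:R : F) != 0 -> (2%:R : F) != 0 -> (3%:R : F) != 0 ->
    (forall i, Q i *m P i = 1%:M) ->
    (forall i j, i != j -> forall s t, (Q i *m P j) s t * (Q j *m P i) t s = k) ->
  has_COD F n.
Proof.
move=> n_neq0 two_neq0 three_neq0 QP unbiased.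
have n_gt0 : (0 < n)%N by rewrite lt0n; apply: contra_neq n_neq0 => ->.
pose H i := frame_cartan (P i) (Q i).
have orth i j : i != j -> {in H i & H j, forall x y, \tr (x *m y) = 0}.
  by move=> ij; apply: frame_cartan_orthogonal (QP i) (QP j) (unbiased i j ij).
have H_direct : directv (\sum_i H i).
  apply/directv_sum_independent => us us_H sum0 j _.
  apply: (frame_cartan_nondeg (QP j) n_neq0 (us_H j isT)) => h hH.
  have := congr1 (fun z => \tr (z *m h)) sum0; rewrite /= mul0mx mxtrace0.
  rewrite mulmx_suml raddf_sum (bigD1 j) //= big1 ?addr0 // => i ij.
  exact: orth (us_H i isT) hH.
exists H; split=> //.
- apply/eqP; rewrite eq_sym eqEdim; apply/andP; split.
    by apply/subv_sumP => i _; apply: frame_cartan_sl.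
  rewrite (directvP H_direct) dim_sl //= (eq_bigr (fun _ => n.-1)) => [|i _]; last first.
    exact: dim_frame_cartan.
  by rewrite sum_nat_const card_ord; case: n n_gt0 => // m _; rewrite mulSn mulnS.
- by move=> i; apply: frame_cartan_classical.
- by move=> i j ij x y xH yH; rewrite /killing (orth i j ij x y xH yH) mulr0.
Qed.

End UnbiasedFrames.

Section QuadraticPhases.
Variables (K F : finFieldType) (chi : K -> F).
Hypotheses (chiD : {morph chi : x y / x + y >-> x * y}) (chi0 : chi 0 = 1).

Lemma chiNK x : chi (- x) * chi x = 1.
Proof. by rewrite -chiD addNr chi0. Qed.

Lemma chi_neq0 x : chi x != 0.
Proof. by apply: contra_eq_neq (chiNK x) => ->; rewrite mulr0 eq_sym oner_neq0. Qed.

Lemma chiN x : chi (- x) = (chi x)^-1.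
Proof. by apply: (mulIf (chi_neq0 x)); rewrite chiNK mulVf ?chi_neq0. Qed.

Definition quadratic_phase (c : K) (g : K -> F) :=
  (forall y, g y != 0) /\ (forall y t, g (y + t) = g y * g t * chi (c * y * t)).

Lemma quadratic_phase0 c g : quadratic_phase c g -> g 0 = 1.
Proof.
case=> g_neq0 gD; have := gD 0 0; rewrite addr0 !mulr0 chi0 mulr1 => g00.
by apply: (mulfI (g_neq0 0)); rewrite -g00 mulr1.
Qed.

Lemma quadratic_phase_div a b ga gb : quadratic_phase a ga -> quadratic_phase b gb ->
  quadratic_phase (b - a) (fun y => gb y / ga y).
Proof.
move=> [ga_neq0 gaD] [gb_neq0 gbD]; split=> [y|y t].
  by rewrite mulf_neq0 ?invr_eq0.
rewrite gaD gbD !mulrBl chiD chiN !invfM.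
have := chi_neq0 (a * y * t); move: (chi (b * y * t)) (chi (a * y * t)) => X Y Y_neq0.
by field; rewrite Y_neq0 !ga_neq0.
Qed.

Hypothesis chi_nontrivial : exists x0, chi x0 != 1.

Lemma char_sum c : \sum_y chi (c * y) = if c == 0 then #|K|%:R else 0.
Proof.
case: eqP => [->|/eqP c_neq0].
  by rewrite (eq_bigr (fun _ => 1)) ?sumr_const // => y _; rewrite mul0r chi0.
have [x0 chi_x0] := chi_nontrivial; set S := \sum_y _.
have S_fix : S = chi x0 * S.
  rewrite /S mulr_sumr (reindex_inj (addrI (c^-1 * x0))) /=.
  by apply: eq_bigr => y _; rewrite mulrDr mulrA mulfV // mul1r chiD.
apply/eqP; move/eqP: S_fix; rewrite -subr_eq0 -{1}[S]mul1r -mulrBl mulf_eq0 subr_eq0 eq_sym.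
by rewrite (negPf chi_x0).
Qed.

(* |sum_y g(y) chi(d y)|^2 = #|K|, written without complex conjugation. *)
Lemma quadratic_phase_sum_norm c g d : c != 0 -> quadratic_phase c g ->
  \sum_y \sum_z (g y * chi (d * y)) * ((g z)^-1 * chi (- (d * z))) = #|K|%:R.
Proof.
move=> c_neq0 [g_neq0 gD].
have inner y : \sum_z (g y * chi (d * y)) * ((g z)^-1 * chi (- (d * z))) =
    \sum_t (g t)^-1 * chi (- (d * t)) * chi (- (c * t) * y).
  rewrite (reindex_inj (addrI y)) /=; apply: eq_bigr => t _.
  rewrite gD mulrDr opprD chiD !chiN mulNr chiN (mulrAC c t y).
  by field; rewrite !chi_neq0 !g_neq0.
rewrite (eq_bigr _ (fun y _ => inner y)) exchange_big /=.
rewrite (bigD1 0) //= [X in _ + X]big1 ?addr0 => [|t t_neq0].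
  rewrite -mulr_sumr char_sum !mulr0 !oppr0 eqxx (quadratic_phase0 (conj g_neq0 gD)).
  by rewrite invr1 chi0 !mul1r.
by rewrite -mulr_sumr char_sum oppr_eq0 mulf_eq0 (negPf c_neq0) (negPf t_neq0) mulr0.
Qed.

End QuadraticPhases.

Section MutuallyUnbiasedFrames.
Variables (F K : finFieldType) (n : nat) (e : 'I_n -> K).
Hypothesis e_bij : bijective e.
Variable chi : K -> F.
Hypotheses (chiD : {morph chi : x y / x + y >-> x * y}) (chi0 : chi 0 = 1).
Hypothesis chi_nontrivial : exists x0, chi x0 != 1.
Hypothesis n_neq0 : (n%:R : F) != 0.
Variable f : K -> K -> F.
Hypothesis f_phase : forall a, quadratic_phase chi a (f a).

Let cardK : #|K| = n. Proof. by rewrite -(bij_eq_card e_bij) card_ord. Qed.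

Let f_neq0 a y : f a y != 0. Proof. by case: (f_phase a). Qed.

Lemma sum_ord_bij (G : K -> F) : \sum_(s < n) G (e s) = \sum_y G y.
Proof. by symmetry; apply: reindex; apply: onW_bij. Qed.

Definition mub_frame a : 'M[F]_n := \matrix_(s, t) (f a (e s) * chi (e s * e t)).
Definition mub_coframe a : 'M[F]_n :=
  \matrix_(s, t) (n%:R^-1 * (f a (e t))^-1 * chi (- (e s * e t))).

Lemma mub_coframeK a : mub_coframe a *m mub_frame a = 1%:M.
Proof.
apply/matrixP => s t; rewrite !mxE.
rewrite (eq_bigr (fun u => n%:R^-1 * chi ((e t - e s) * e u))) => [|u _]; last first.
  rewrite !mxE mulrBl chiD !(chiN chiD chi0) [e u * e t]mulrC.
  by field; rewrite (chi_neq0 chiD chi0) n_neq0 f_neq0.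
rewrite -mulr_sumr (sum_ord_bij (fun y => chi ((e t - e s) * y))) char_sum //.
rewrite subr_eq0 (inj_eq (bij_inj e_bij)) eq_sym; case: eqP => _; last by rewrite mulr0.
by rewrite cardK mulVf.
Qed.

Lemma mub_frame_coframeE a s t : mub_frame a s t * mub_coframe a t s = n%:R^-1.
Proof.
rewrite !mxE [e t * _]mulrC (chiN chiD chi0).
by field; rewrite (chi_neq0 chiD chi0) n_neq0 f_neq0.
Qed.

Lemma mub_frames_unbiased a b s t : a != b ->
  (mub_coframe a *m mub_frame b) s t * (mub_coframe b *m mub_frame a) t s = n%:R^-1.
Proof.
move=> ab; pose g y := f b y / f a y; pose d := e t - e s.
have g_phase : quadratic_phase chi (b - a) g by apply: quadratic_phase_div.
have entry1 : (mub_coframe a *m mub_frame b) s t = n%:R^-1 * \sum_y g y * chi (d * y).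
  rewrite mxE -(sum_ord_bij (fun y => g y * chi (d * y))) mulr_sumr.
  apply: eq_bigr => u _; rewrite !mxE /g /d mulrBl chiD (chiN chiD chi0) [e u * e t]mulrC.
  field.
  by rewrite (chi_neq0 chiD chi0) n_neq0 f_neq0.
have entry2 : (mub_coframe b *m mub_frame a) t s =
    n%:R^-1 * \sum_z (g z)^-1 * chi (- (d * z)).
  rewrite mxE -(sum_ord_bij (fun z => (g z)^-1 * chi (- (d * z)))) mulr_sumr.
  apply: eq_bigr => u _; rewrite !mxE /g /d mulrBl opprB chiD !(chiN chiD chi0).
  rewrite [e u * e s]mulrC; field.
  by rewrite !(chi_neq0 chiD chi0) n_neq0 !f_neq0.
rewrite entry1 entry2 mulrACA mulr_suml.
under eq_bigr do rewrite mulr_sumr.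
rewrite (quadratic_phase_sum_norm chiD chi0 chi_nontrivial _ _ g_phase); last first.
  by rewrite subr_eq0 eq_sym.
by rewrite cardK -mulrA mulVf ?mulr1.
Qed.

Definition cod_frame (i : 'I_n.+1) := if unlift ord0 i is Some j then mub_frame (e j) else 1%:M.
Definition cod_coframe (i : 'I_n.+1) :=
  if unlift ord0 i is Some j then mub_coframe (e j) else 1%:M.

Lemma mub_COD : (2%:R : F) != 0 -> (3%:R : F) != 0 -> has_COD F n.
Proof.
move=> two_neq0 three_neq0.
apply: (@unbiased_frames_COD F n cod_frame cod_coframe n%:R^-1) => // [i|i j ij s t].
  by rewrite /cod_frame /cod_coframe; case: unliftP => [j _|_]; rewrite ?mub_coframeK ?mul1mx.
rewrite /cod_frame /cod_coframe.
case: (unliftP ord0 i) => [i' ei|ei]; case: (unliftP ord0 j) => [j' ej|ej].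
- apply: mub_frames_unbiased; apply: contra_neq ij => /(bij_inj e_bij).
  by rewrite ei ej => ->.
- by rewrite mul1mx mulmx1 mulrC mub_frame_coframeE.
- by rewrite mul1mx mulmx1 mub_frame_coframeE.
- by move: ij; rewrite ei ej eqxx.
Qed.

End MutuallyUnbiasedFrames.

Lemma finField_prim_root (F : finFieldType) N :
  (N %| #|F|.-1)%N -> exists w : F, N.-primitive_root w.
Proof.
move=> N_dvd; case/cyclicP: (field_unit_group_cyclic [set: {unit F}]%G) => g gen_g.
have ord_g : #[g]%g = #|F|.-1 by rewrite /order -gen_g card_finField_unit.
have g_exp : FinRing.uval g ^+ #[g]%g = 1 by rewrite -FinRing.val_unitX expg_order.
have [m prim_g m_dvd] := prim_order_exists (order_gt0 g) g_exp.
suff m_eq : m = #|F|.-1.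
  by rewrite m_eq in prim_g; exists (FinRing.uval g ^+ (#|F|.-1 %/ N)); apply: dvdn_prim_root.
apply/eqP; rewrite eqn_dvd -ord_g m_dvd order_dvdn /=.
by apply/eqP/val_inj; rewrite /= FinRing.val_unitX (prim_expr_order prim_g).
Qed.

Section FpExponents.
Variables (p : nat) (R : nzRingType) (w : R).
Hypotheses (p_prime : prime p) (wp : w ^+ p = 1).

Lemma expr_FpD (c d : 'F_p) : w ^+ (c + d)%R = w ^+ c * w ^+ d.
Proof.
have := val_Fp_nat p_prime (c + d)%N; rewrite natrD !natr_Zp => ->.
by rewrite expr_mod // exprD.
Qed.

End FpExponents.

Section AdditiveCharacter.
Variables (p : nat) (K0 : finFieldType) (pK : p \in [pchar K0]).
Local Notation K := (pPrimeCharType pK).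
Variables (F : finFieldType) (w : F).
Hypothesis wp : w ^+ p = 1.

Let p_prime : prime p := pcharf_prime pK.

Fact dim_pPrimeChar_gt0 : (0 < \dim {:K})%N.
Proof.
rewrite lt0n dimv_eq0; apply: contraTneq (memvf (1 : K)) => ->.
by rewrite memv0 oner_eq0.
Qed.

(* Any nonzero F_p-linear form on K would do; we take the first coordinate in [vbasis]. *)
Definition addchar (x : K) : F :=
  w ^+ coord (vbasis {:K}) (Ordinal dim_pPrimeChar_gt0) x.

Lemma addcharD : {morph addchar : x y / x + y >-> x * y}.
Proof. by move=> x y; rewrite /addchar linearD expr_FpD. Qed.

Lemma addchar0 : addchar 0 = 1.
Proof. by rewrite /addchar linear0. Qed.

Lemma addchar_nontrivial : w != 1 -> exists x0, addchar x0 != 1.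
Proof.
move=> w_neq1; exists (vbasis {:K})`_(Ordinal dim_pPrimeChar_gt0).
by rewrite /addchar coord_free ?(basis_free (vbasisP _)) // eqxx.
Qed.

Lemma addchar_neq0 x : addchar x != 0.
Proof.
rewrite expf_neq0 //; apply: contra_eq_neq wp => ->.
by rewrite expr0n gtn_eqF ?prime_gt0 // eq_sym oner_neq0.
Qed.

Lemma quadratic_phase_odd a : p != 2%N ->
  quadratic_phase addchar a (fun y => addchar (a * y * y / 2%:R)).
Proof.
move=> p_neq2; split=> [y|y t]; first exact: addchar_neq0.
have two_neq0 : (2%:R : K) != 0.
  apply: contra_neq p_neq2 => two0; have : 2%N \in [pchar K] by rewrite inE /= two0.
  by rewrite (pcharf_eq pK) inE => /eqP.
by rewrite -!addcharD; congr addchar; field.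
Qed.

End AdditiveCharacter.

Arguments addchar {p K0} pK {F} w x.

Lemma prod_pairs (R : comNzRingType) d (G : 'I_d -> 'I_d -> R) :
  \prod_j \prod_k G j k =
  \prod_(j < d) \prod_(k < d)
    (if (j < k)%N then G j k * G k j else if j == k then G j j else 1).
Proof.
pose X (j k : 'I_d) := if (j < k)%N then G j k else 1.
pose Y (j k : 'I_d) := if (j < k)%N then G k j else 1.
pose Z (j k : 'I_d) := if j == k then G j j else 1.
have split3 (A B C : 'I_d -> 'I_d -> R) :
    \prod_j \prod_k (A j k * B j k * C j k) =
    (\prod_j \prod_k A j k) * (\prod_j \prod_k B j k) * (\prod_j \prod_k C j k).
  by rewrite -!big_split; apply: eq_bigr => j _; rewrite -!big_split.
have lt_neq (j k : 'I_d) : (j < k)%N -> (j == k) = false.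
  by move=> jk; apply: contraTF jk => /eqP->; rewrite ltnn.
transitivity (\prod_j \prod_k (X j k * Y k j * Z j k)).
  apply: eq_bigr => j _; apply: eq_bigr => k _; rewrite /X /Y /Z.
  case: ltngtP => [jk|kj|/val_inj->]; last by rewrite eqxx !mul1r.
    by rewrite lt_neq // !mulr1.
  by rewrite eq_sym lt_neq // mul1r mulr1.
rewrite split3 [\prod_j \prod_k Y k j]exchange_big -split3 /=.
apply: eq_bigr => j _; apply: eq_bigr => k _; rewrite /X /Y /Z.
by case: ltnP => [/lt_neq->|]; rewrite ?mulr1 ?mul1r.
Qed.

Section CharTwoPhases.
Variables (K0 : finFieldType) (pK : 2%N \in [pchar K0]).
Local Notation K := (pPrimeCharType pK).
Variables (F : finFieldType) (I : F).
Hypothesis I_sqr : I * I = -1.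

Let minus1_sqr : (-1 : F) ^+ 2 = 1. Proof. by rewrite sqrrN expr1n. Qed.
Local Notation chi := (addchar pK (-1 : F)).
Local Notation b := (vbasis {:K}).
Local Notation cf j x := (coord b j x : 'F_2).
Let i0 := Ordinal (dim_pPrimeChar_gt0 pK).

Definition sgF2 (c : 'F_2) : F := (-1) ^+ c.
Definition isgF2 (c : 'F_2) : F := I ^+ c.

Lemma sgF20 : sgF2 0 = 1. Proof. by []. Qed.

Lemma sgF2D : {morph sgF2 : c d / c + d >-> c * d}.
Proof. exact: expr_FpD. Qed.

Lemma F2_cases (c : 'F_2) : c = 0 \/ c = 1.
Proof. by case: c => [[|[|//]] ?]; [left|right]; apply: val_inj. Qed.

Lemma F2_mulrr (c : 'F_2) : c * c = c.
Proof. by case: (F2_cases c) => ->; rewrite ?mulr0 ?mulr1. Qed.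

Lemma isgF2D c d : isgF2 (c + d) = isgF2 c * isgF2 d * sgF2 (c * d).
Proof.
have val0 : nat_of_ord (0 : 'F_2) = 0%N by [].
have val1 : nat_of_ord (1 : 'F_2) = 1%N by [].
have add11 : 1 + 1 = 0 :> 'F_2 by apply: val_inj.
rewrite /isgF2 /sgF2; case: (F2_cases c) => ->; case: (F2_cases d) => ->;
  rewrite ?add11 ?(add0r, addr0, mul0r, mulr0, mulr1) ?val0 ?val1 ?expr0 ?expr1;
  rewrite ?mulr1 ?mul1r //.
by rewrite I_sqr mulrN1 opprK.
Qed.

Lemma addchar_F2 x : chi x = sgF2 (cf i0 x). Proof. by []. Qed.

Definition gram a j k := cf i0 (a * b`_j * b`_k).

Lemma gramC a j k : gram a j k = gram a k j.
Proof. by rewrite /gram mulrAC. Qed.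

Lemma addchar_bilinear a y t :
  chi (a * y * t) = \prod_j \prod_k sgF2 (cf j y * cf k t * gram a j k).
Proof.
rewrite {1}(coord_vbasis (memvf y)) mulr_sumr mulr_suml.
rewrite addchar_F2 linear_sum (big_morph _ sgF2D sgF20).
apply: eq_bigr => j _.
rewrite {1}(coord_vbasis (memvf t)) mulr_sumr linear_sum (big_morph _ sgF2D sgF20).
apply: eq_bigr => k _.
by rewrite -!scalerAr -scalerAl scalerA linearZ /= [coord _ k t * _]mulrC.
Qed.

(* Halving is impossible in characteristic 2, so instead of chi (a y^2 / 2) take the upper
   triangular part of [gram a], with a square root I of -1 on the diagonal. *)
Definition phase2 (a y : K) : F := \prod_(j < \dim {:K}) \prod_(k < \dim {:K})
  (if (j < k)%N then sgF2 (gram a j k * cf j y * cf k y)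
   else if j == k then isgF2 (gram a j j * cf j y) else 1).

Lemma phase2_neq0 a y : phase2 a y != 0.
Proof.
have I_neq0 : I != 0.
  by apply: contra_eq_neq I_sqr => ->; rewrite mul0r eq_sym oppr_eq0 oner_eq0.
rewrite prodf_seq_neq0; apply/allP => j _; rewrite prodf_seq_neq0; apply/allP => k _.
by case: ifP => _; [rewrite signr_eq0 | case: ifP => _; rewrite ?expf_neq0 ?oner_eq0].
Qed.

Lemma phase2D a y t : phase2 a (y + t) = phase2 a y * phase2 a t * chi (a * y * t).
Proof.
rewrite addchar_bilinear prod_pairs /phase2 -!big_split; apply: eq_bigr => j _.
rewrite -!big_split; apply: eq_bigr => k _ /=; rewrite !linearD /=.
case: ltnP => _; last case: eqP => [->|_]; rewrite ?mulr1 //.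
  by rewrite [gram a k j]gramC -!sgF2D; congr sgF2; ring.
rewrite mulrDr isgF2D; congr (_ * sgF2 _).
by rewrite mulrACA F2_mulrr; ring.
Qed.

Lemma quadratic_phase_two a : quadratic_phase chi a (phase2 a).
Proof. by split; [apply: phase2_neq0 | apply: phase2D]. Qed.

End CharTwoPhases.

Lemma ord_bijective (T : finType) n : #|T| = n -> exists e : 'I_n -> T, bijective e.
Proof.
move=> <-; exists enum_val, enum_rank; [exact: enum_valK | exact: enum_rankK].
Qed.

Lemma prim_root_neq1 (R : nzRingType) N (w : R) :
  (1 < N)%N -> N.-primitive_root w -> w != 1.
Proof. by move=> N_gt1 w_prim; rewrite -[w]expr1 -(prim_order_dvd w_prim) dvdn1 gtn_eqF. Qed.

Lemma prim_root4_sqr (R : idomainType) (I : R) : 4.-primitive_root I -> I * I = -1.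
Proof.
move=> I_prim; have /eqP := prim_expr_order I_prim; rewrite (exprM I 2 2) sqrf_eq1.
case/orP=> /eqP I2; last by rewrite -expr2.
by have := prim_order_dvd I_prim 2; rewrite I2 eqxx.
Qed.

Theorem corollary2p3 (F : finFieldType) (p m : nat) :
  prime p -> (0 < m)%N ->
  2%N \notin [pchar F] -> 3%N \notin [pchar F] -> p \notin [pchar F] ->
  ((p == 2%N) && (#|F| %% 4 == 1)%N) || ((2 < p)%N && (p %| #|F|.-1)%N) ->
  has_COD F (p ^ m).
Proof.
move=> p_prime m_gt0 char2 char3 charp cond.
have natr_neq0 k : prime k -> k \notin [pchar F] -> (k%:R : F) != 0.
  by move=> k_prime; apply: contra => k0; rewrite inE k_prime k0.
have [K0 pK cardK0] := pPrimePowerField p_prime m_gt0.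
have [e e_bij] := ord_bijective (cardK0 : #|pPrimeCharType pK| = _).
suff [w [f [wp w_neq1 f_phase]]] : exists w (f : pPrimeCharType pK -> _ -> F),
    [/\ w ^+ p = 1, w != 1 & forall a, quadratic_phase (addchar pK w) a (f a)].
  apply: (mub_COD e_bij (addcharD wp) (addchar0 pK w) (addchar_nontrivial pK w_neq1) _
    f_phase).
  - by rewrite natrX expf_neq0 ?natr_neq0.
  - exact: natr_neq0.
  - exact: natr_neq0.
case/orP: cond => [/andP[/eqP p2 q4] | /andP[p_gt2 p_dvd]].
  have [I /prim_root4_sqr I_sqr] : exists I : F, 4.-primitive_root I.
    by apply: finField_prim_root; rewrite (divn_eq #|F| 4) (eqP q4) addn1 dvdn_mull.
  subst p; exists (-1), (phase2 I); split; first by rewrite sqrrN expr1n.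
    by rewrite eq_sym -addr_eq0 -mulr2n natr_neq0.
  exact: quadratic_phase_two.
have [w w_prim] := finField_prim_root p_dvd.
exists w, (fun a y => addchar pK w (a * y * y / 2%:R)); split.
- exact: prim_expr_order.
- exact: prim_root_neq1 (prime_gt1 p_prime) w_prim.
- by move=> a; apply: (quadratic_phase_odd (prim_expr_order w_prim)); rewrite gtn_eqF.
Qed.
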